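(* Let $G=(V,E)$ be a graph on $n$ vertices and $\mathbb{F}$ a field. If there is a proper coloring $c:V\to[m]$ of $G$ with locality $\ell$ and $|\mathbb{F}|\ge m$, then $\mathrm{minrk}_{\mathbb{F}}(\overline{G})\le\ell$. In particular, if $|\mathbb{F}|\ge n$, then $\mathrm{minrk}_{\mathbb{F}}(\overline{G})\le\chi_l(G)$.
   Context: $\overline{G}$ is the complement of $G$. The locality of a proper coloring is the maximum over vertices $v$ of the number of distinct colors on the closed neighborhood $\{v\}\cup N(v)$; $\chi_l(G)$ is the minimum locality of a proper coloring of $G$. For a graph $H$ on $[n]$, a matrix $M\in\mathbb{F}^{n\times n}$ represents $H$ if $M_{i,i}\ne0$ for all $i$ and $M_{i,j}=0$ for distinct non-adjacent $i,j$; $\mathrm{minrk}_{\mathbb{F}}(H)$ is the minimum rank of such a matrix. *)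

From mathcomp Require Import all_boot all_order all_algebra.
From Stdlib Require Import ClassicalEpsilon.
Set Implicit Arguments. Unset Strict Implicit. Unset Printing Implicit Defensive.
Import GRing.Theory.
Local Open Scope ring_scope.

Definition pb (P : Prop) : bool :=
  if excluded_middle_informative P then true else false.
Lemma pbP (P : Prop) : pb P <-> P.
Proof. by rewrite /pb; case: excluded_middle_informative. Qed.

Definition simple_graph (n : nat) (e : rel 'I_n) : Prop :=
  symmetric e /\ irreflexive e.

Definition compl_graph (n : nat) (e : rel 'I_n) : rel 'I_n :=
  fun i j => (i != j) && ~~ e i j.

Definition proper_coloring (n m : nat) (e : rel 'I_n) (c : 'I_n -> 'I_m) : Prop :=
  forall u v, e u v -> c u != c v.

Definition closed_nbhd (n : nat) (e : rel 'I_n) (v : 'I_n) : {set 'I_n} :=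
  [set u | (u == v) || e v u].

Definition locality (n m : nat) (e : rel 'I_n) (c : 'I_n -> 'I_m) : nat :=
  \max_(v : 'I_n) #|[set c u | u in closed_nbhd e v]|.

(* chi_l(G): minimum locality of a proper colouring of G (when G has a
   proper colouring, which is always the case for a simple graph; the
   fallback value 0 is never used under the simple-graph hypothesis). *)
Definition has_coloring_of_locality (n : nat) (e : rel 'I_n) (l : nat) : Prop :=
  exists (m : nat) (c : 'I_n -> 'I_m), proper_coloring e c /\ locality e c = l.

Definition chi_l (n : nat) (e : rel 'I_n) : nat :=
  match excluded_middle_informative
          (exists l, pb (has_coloring_of_locality e l)) with
  | left h => ex_minn h
  | right _ => 0%N
  end.

Definition represents (F : fieldType) (n : nat) (H : rel 'I_n) (M : 'M[F]_n) : Prop :=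
  (forall i, M i i != 0) /\ (forall i j, i != j -> ~~ H i j -> M i j = 0).

Lemma minrk_ex (F : fieldType) (n : nat) (H : rel 'I_n) :
  exists r, pb (exists M : 'M[F]_n, represents H M /\ \rank M = r).
Proof.
exists (\rank (1%:M : 'M[F]_n)); apply/pbP; exists 1%:M; split => //; split.
- by move=> i; rewrite mxE eqxx oner_eq0.
- by move=> i j /negbTE ij _; rewrite mxE ij.
Qed.

Definition minrk (F : fieldType) (n : nat) (H : rel 'I_n) : nat :=
  ex_minn (minrk_ex F H).

From mathcomp Require Import all_boot all_order all_algebra.
From Stdlib Require Import ClassicalEpsilon.
Set Implicit Arguments. Unset Strict Implicit. Unset Printing Implicit Defensive.
Import GRing.Theory.
Local Open Scope ring_scope.

(* Encode the colours injectively into F by f, let l be the locality, and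
   attach to each vertex v the polynomial p_v vanishing exactly at the codes
   of the colours other than c(v) seen on N[v]; it has degree < l.  The
   product of the evaluation matrix (f(c u)^i)_{u,i} with the coefficient
   matrix ((p_v)_i)_{i,v} has entry p_v(f(c u)) at (u, v): nonzero on the
   diagonal, and zero whenever u ~ v, since then c(u) <> c(v) is a colour of
   N[v].  So it represents the complement and has rank at most l. *)

Lemma minrk_le_rank (F : fieldType) (n : nat) (H : rel 'I_n) (M : 'M[F]_n) :
  represents H M -> (minrk F H <= \rank M)%N.
Proof.
by move=> repM; rewrite /minrk; case: ex_minnP => r _; apply; apply/pbP; exists M.
Qed.

Section LocalityRepresentation.

Variables (F : fieldType) (n m : nat) (e : rel 'I_n).
Variables (c : 'I_n -> 'I_m) (f : 'I_m -> F).

Definition nbhd_colors (v : 'I_n) : {set 'I_m} := [set c u | u in closed_nbhd e v].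

Definition other_colors_poly (v : 'I_n) : {poly F} :=
  \prod_(x <- [seq f k | k <- enum (nbhd_colors v :\ c v)]) ('X - x%:P).

Lemma size_other_colors_poly v : (size (other_colors_poly v) <= locality e c)%N.
Proof.
rewrite size_prod_XsubC size_map -cardE.
have cv : c v \in nbhd_colors v by apply: imset_f; rewrite inE eqxx.
have := @leq_bigmax _ (fun v => #|nbhd_colors v|) v.
by rewrite (cardsD1 (c v)) cv.
Qed.

Lemma root_other_colors_poly v x :
  root (other_colors_poly v) x = (x \in [seq f k | k <- enum (nbhd_colors v :\ c v)]).
Proof. exact: root_prod_XsubC. Qed.

Definition color_power_mx : 'M[F]_(n, locality e c) :=
  \matrix_(u, i) f (c u) ^+ i.

Definition other_colors_coef_mx : 'M[F]_(locality e c, n) :=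
  \matrix_(i, v) (other_colors_poly v)`_i.

Definition locality_mx : 'M[F]_n := color_power_mx *m other_colors_coef_mx.

Lemma locality_mxE u v : locality_mx u v = (other_colors_poly v).[f (c u)].
Proof.
rewrite !mxE (horner_coef_wide _ (size_other_colors_poly v)).
by apply: eq_bigr => i _; rewrite !mxE mulrC.
Qed.

Lemma rank_locality_mx : (\rank locality_mx <= locality e c)%N.
Proof. exact: leq_trans (mxrankM_maxl _ _) (rank_leq_col _). Qed.

Lemma locality_mx_represents_compl :
  symmetric e -> proper_coloring e c -> {in codom c &, injective f} ->
  represents (compl_graph e) locality_mx.
Proof.
move=> esym pc finj; split => [v | u v uv].
  rewrite locality_mxE -rootE root_other_colors_poly.
  apply/mapP => -[k]; rewrite mem_enum !inE => /andP[kv /imsetP[w _ kw]] fk.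
  have cwv : c w = c v by apply: finj; rewrite ?codom_f // -kw fk.
  by move: kv; rewrite kw cwv eqxx.
rewrite /compl_graph uv negbK => euv.
apply/eqP; rewrite locality_mxE -rootE root_other_colors_poly.
apply: map_f; rewrite mem_enum !inE (pc _ _ euv) /=.
by apply: imset_f; rewrite inE esym euv orbT.
Qed.

Lemma minrk_compl_le_locality :
  symmetric e -> proper_coloring e c -> {in codom c &, injective f} ->
  (minrk F (compl_graph e) <= locality e c)%N.
Proof.
move=> esym pc finj.
apply: leq_trans (minrk_le_rank (locality_mx_represents_compl esym pc finj)) _.
exact: rank_locality_mx.
Qed.

End LocalityRepresentation.

Lemma injective_on_codom (T : finType) (m : nat) (F : Type) (c : T -> 'I_m)
    (g : T -> F) :
  injective g -> F -> exists f : 'I_m -> F, {in codom c &, injective f}.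
Proof.
move=> ginj x0.
exists (fun k => if [pick u | c u == k] is Some u then g u else x0).
move=> _ _ /codomP[u ->] /codomP[w ->].
case: pickP => [u' /eqP <-|]; last by move=> /(_ u); rewrite eqxx.
case: pickP => [w' /eqP <-|]; last by move=> /(_ w); rewrite eqxx.
by move=> /ginj ->.
Qed.

Lemma chi_l_coloring (n : nat) (e : rel 'I_n) :
  irreflexive e ->
  exists m (c : 'I_n -> 'I_m), proper_coloring e c /\ locality e c = chi_l e.
Proof.
move=> eirr; rewrite /chi_l; case: excluded_middle_informative => [h|[]].
  by case: (ex_minnP h) => l /pbP.
exists (locality e id); apply/pbP; exists n, id; split => // u v.
by apply: contraTneq => ->; rewrite eirr.
Qed.

(* |F| >= k is expressed as: there is an injection 'I_k -> F. *)
Theorem mainTheorem11 (F : fieldType) (n : nat) (e : rel 'I_n) :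
  simple_graph e ->
  (forall (m : nat) (c : 'I_n -> 'I_m) (l : nat),
      proper_coloring e c -> locality e c = l ->
      (exists f : 'I_m -> F, injective f) ->
      (minrk F (compl_graph e) <= l)%N)
  /\
  ((exists f : 'I_n -> F, injective f) ->
      (minrk F (compl_graph e) <= chi_l e)%N).
Proof.
move=> [esym eirr]; split.
  move=> m c l pc <- [f finj].
  by apply: (minrk_compl_le_locality (f := f)) => // ? ? _ _ /finj.
move=> [g ginj].
have [m [c [pc <-]]] := chi_l_coloring eirr.
have [f finj] := injective_on_codom c ginj 0.
exact: minrk_compl_le_locality pc finj.
Qed.
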